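(* Consider the algorithm PGiPN described in the context, applied with some $\epsilon\ge0$. Let $k$ be an iteration at which the algorithm did not stop and at which the switch condition $\mathrm{supp}(x^k)=\mathrm{supp}(\bar x^k)$, $\mathrm{supp}(Bx^k)=\mathrm{supp}(B\bar x^k)$ holds. Define $R_k(y)=\bar\mu_k[y-\mathrm{proj}_{\Pi_k}(y-\bar\mu_k^{-1}(G_k(y-x^k)+\nabla f(x^k)))]$ and $r_k(x)=\bar\mu_k[x-\mathrm{proj}_{\Pi_k}(x-\bar\mu_k^{-1}\nabla f(x))]$. Then: (i) for every $y$ sufficiently close to the (unique) minimizer of $\Theta_k$, the point $y-\bar\mu_k^{-1}R_k(y)$ satisfies both inexactness conditions $\Theta_k(y)\le\Theta_k(x^k)$ and $\mathrm{dist}(0,\partial\Theta_k(y))\le\frac{\min\{\bar\mu_k^{-1},1\}}{2}\min\{\|\bar\mu_k(x^k-\bar x^k)\|,\|\bar\mu_k(x^k-\bar x^k)\|^{1+\varsigma}\}$; (ii) for $y^k$ satisfying these conditions, the line search in the Newton step terminates after finitely many trials and $\alpha_k\ge\min\{1,\frac{(1-\varrho)b_1\beta}{L_1}\|\bar\mu_k(x^k-\bar x^k)\|^\sigma\}$; (iii) the second inexactness condition on $y^k$ implies $\|R_k(y^k)\|\le\frac12\min\{\|r_k(x^k)\|,\|r_k(x^k)\|^{1+\varsigma}\}$.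
   Context: Setting: $B\in\mathbb{R}^{p\times n}$, $\lambda_1,\lambda_2>0$, $l\le0\le u$ in $\mathbb{R}^n$, $f:\mathbb{R}^n\to\mathbb{R}$ twice continuously differentiable, $\Omega=\{x:l\le x\le u\}$, $g(x)=\lambda_1\|Bx\|_0+\lambda_2\|x\|_0+\delta_\Omega(x)$ ($\|\cdot\|_0$ = number of nonzeros, $\delta_\Omega$ indicator), $F=f+g$; $\mathrm{supp}(x)=\{i:x_i\ne0\}$; $\mathrm{prox}_{\mu g}(z)=\arg\min_x\{\frac1{2\mu}\|x-z\|^2+g(x)\}$; $L_1>0$ is a Lipschitz constant of $\nabla f$ on $\Omega$; $\Pi(z)=\{x\in\Omega:\mathrm{supp}(x)\subset\mathrm{supp}(z),\mathrm{supp}(Bx)\subset\mathrm{supp}(Bz)\}$; $\mathrm{proj}_C$ is Euclidean projection; $\partial$ denotes subdifferential. Algorithm PGiPN: parameters $\epsilon\ge0$, $\mu_{\max}>\mu_{\min}>0$, $\tau>1$, $\alpha>0$, $b_1>0$, $b_2\ge1$, $\varrho\in(0,\frac12)$, $\sigma\in(0,\frac12)$, $\varsigma\in(\sigma,1]$, $\beta\in(0,1)$, $x^0\in\Omega$. Iteration $k$: (PG step) pick $\mu_k\in[\mu_{\min},\mu_{\max}]$; let $m_k$ be the smallest nonnegative integer $m$ such that some $\bar x^k\in\mathrm{prox}_{(\mu_k\tau^m)^{-1}g}(x^k-(\mu_k\tau^m)^{-1}\nabla f(x^k))$ satisfies $F(\bar x^k)\le F(x^k)-\frac\alpha2\|x^k-\bar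 x^k\|^2$; set $\bar\mu_k=\mu_k\tau^{m_k}$. If $\bar\mu_k\|x^k-\bar x^k\|\le\epsilon$, stop. If the switch condition holds go to the Newton step, else set $x^{k+1}=\bar x^k$. (Newton step) let $\Pi_k=\Pi(x^k)$, $\Theta_k(x)=f(x^k)+\langle\nabla f(x^k),x-x^k\rangle+\frac12\langle x-x^k,G_k(x-x^k)\rangle+\delta_{\Pi_k}(x)$; find $y^k$ satisfying the two inexactness conditions stated in (i); set $d^k=y^k-x^k$; let $t_k$ be the smallest nonnegative integer $t$ with $f(x^k+\beta^td^k)\le f(x^k)+\varrho\beta^t\langle\nabla f(x^k),d^k\rangle$; $\alpha_k=\beta^{t_k}$, $x^{k+1}=x^k+\alpha_kd^k$. Choice of $G_k$ (with $e_k=b_1\|\bar\mu_k(x^k-\bar x^k)\|^\sigma$): either $G_k=\nabla^2f(x^k)+(b_2[-\lambda_{\min}(\nabla^2f(x^k))]_++e_k)I$; or, when $f(x)=h(Ax-b)$ with $A\in\mathbb{R}^{m\times n}$, $b\in\mathbb{R}^m$, $h$ twice continuously differentiable and separable, $G_k=\nabla^2f(x^k)+b_2[-\lambda_{\min}(\nabla^2h(Ax^k-b))]_+A^\top A+e_kI$ or $G_k=A^\top[\nabla^2h(Ax^k-b)]_+A+e_kI$, where $t_+=\max\{t,0\}$ and $[D]_+$ replaces the negative diagonal entries of the diagonal matrix $D$ by $0$. In all cases $G_k\succeq e_kI$. *)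

From HB Require Import structures.
From mathcomp Require Import all_boot all_order all_algebra.
From mathcomp Require Import all_classical all_reals all_analysis.
Set Implicit Arguments. Unset Strict Implicit. Unset Printing Implicit Defensive.
Import Order.TTheory GRing.Theory Num.Theory.
Import numFieldNormedType.Exports.
Local Open Scope classical_set_scope.
Local Open Scope ring_scope.

Section Defs.
Variable R : realType.

Definition dotv {n} (u v : 'cV[R]_n) : R := \sum_(i < n) u i 0 * v i 0.
Definition enorm {n} (v : 'cV[R]_n) : R := Num.sqrt (dotv v v).

Definition supp {n} (v : 'cV[R]_n) : {set 'I_n} := [set i | v i 0 != 0].
Definition nnz {n} (v : 'cV[R]_n) : nat := #|supp v|.

Definition box {n} (l u : 'cV[R]_n) : set 'cV[R]_n :=
  [set x | forall i, l i 0 <= x i 0 <= u i 0].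

Definition Pi_set {p n} (B : 'M[R]_(p, n)) (l u z : 'cV[R]_n) : set 'cV[R]_n :=
  [set x | box l u x /\ supp x \subset supp z /\ supp (B *m x) \subset supp (B *m z)].

Definition gfun {p n} (lam1 lam2 : R) (B : 'M[R]_(p, n)) (l u : 'cV[R]_n)
  (x : 'cV[R]_n) : \bar R :=
  if `[< box l u x >] then (lam1 * (nnz (B *m x))%:R + lam2 * (nnz x)%:R)%:E
  else +oo%E.

Definition Ffun {p n} (f : 'cV[R]_n -> R) (lam1 lam2 : R) (B : 'M[R]_(p, n))
  (l u : 'cV[R]_n) (x : 'cV[R]_n) : \bar R :=
  ((f x)%:E + gfun lam1 lam2 B l u x)%E.

Definition prox_set {n} (mu : R) (g : 'cV[R]_n -> \bar R) (z : 'cV[R]_n) :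
  set 'cV[R]_n :=
  [set x | forall y, (((2 * mu)^-1 * enorm (x - z) ^+ 2)%:E + g x
                      <= ((2 * mu)^-1 * enorm (y - z) ^+ 2)%:E + g y)%E].

Definition proj {n} (C : set 'cV[R]_n) (z : 'cV[R]_n) : 'cV[R]_n :=
  xget 0 [set q | C q /\ forall q', C q' -> enorm (z - q) <= enorm (z - q')].

Definition Theta {n} (f : 'cV[R]_n -> R) (gf : 'cV[R]_n -> 'cV[R]_n)
  (G : 'M[R]_n) (x : 'cV[R]_n) (Pi : set 'cV[R]_n) (y : 'cV[R]_n) : \bar R :=
  if `[< Pi y >] then
    (f x + dotv (gf x) (y - x) + 2^-1 * dotv (y - x) (G *m (y - x)))%:E
  else +oo%E.

Definition subdiff {n} (F : 'cV[R]_n -> \bar R) (y : 'cV[R]_n) : set 'cV[R]_n :=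
  [set v | F y \is a fin_num /\ forall z, (F y + (dotv v (z - y))%:E <= F z)%E].

(* dist(0, S) (= +oo if S is empty) *)
Definition dist0 {n} (S : set 'cV[R]_n) : \bar R :=
  ereal_inf [set (enorm v)%:E | v in S].

Definition psd {n} (M : 'M[R]_n) : Prop :=
  M^T = M /\ forall v : 'cV[R]_n, 0 <= dotv v (M *m v).

Definition C2_with {n} (f : 'cV[R]_n -> R) (gf : 'cV[R]_n -> 'cV[R]_n)
  (H : 'cV[R]_n -> 'M[R]_n) : Prop :=
  (forall x, differentiable f x /\ forall v, derive f x v = dotv (gf x) v) /\
  (forall x, differentiable gf x /\ forall v, derive gf x v = H x *m v) /\
  continuous H.

Definition lambda_min_is {n} (M : 'M[R]_n) (lam : R) : Prop :=
  eigenvalue M lam /\ forall a, eigenvalue M a -> lam <= a.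

Definition pos_part (t : R) : R := Num.max t 0.

Definition pos_diag {m} (D : 'M[R]_m) : 'M[R]_m :=
  \matrix_(i, j) (if i == j then Num.max (D i j) 0 else D i j).

Definition G_choice {n} (f : 'cV[R]_n -> R) (gf : 'cV[R]_n -> 'cV[R]_n)
  (H : 'cV[R]_n -> 'M[R]_n) (b2 : R) (x : 'cV[R]_n) (e : R) (G : 'M[R]_n) : Prop :=
  (exists lam, lambda_min_is (H x) lam /\ G = H x + (b2 * pos_part (- lam) + e)%:M)
  \/ exists (m : nat) (A : 'M[R]_(m, n)) (b : 'cV[R]_m) (h : 'cV[R]_m -> R)
            (gh : 'cV[R]_m -> 'cV[R]_m) (Hh : 'cV[R]_m -> 'M[R]_m),
      C2_with h gh Hh /\
      (exists hs : 'I_m -> R -> R, forall z, h z = \sum_(i < m) hs i (z i 0)) /\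
      (forall z, f z = h (A *m z - b)) /\
      ((exists lam, lambda_min_is (Hh (A *m x - b)) lam /\
          G = H x + (b2 * pos_part (- lam)) *: (A^T *m A) + e%:M)
       \/ G = A^T *m pos_diag (Hh (A *m x - b)) *m A + e%:M).

Definition pg_ok {p n} (f : 'cV[R]_n -> R) (gf : 'cV[R]_n -> 'cV[R]_n)
  (lam1 lam2 : R) (B : 'M[R]_(p, n)) (l u : 'cV[R]_n) (alpha mu tau : R)
  (x : 'cV[R]_n) (m : nat) (z : 'cV[R]_n) : Prop :=
  prox_set ((mu * tau ^+ m)^-1) (gfun lam1 lam2 B l u)
           (x - (mu * tau ^+ m)^-1 *: gf x) z /\
  (Ffun f lam1 lam2 B l u z <= Ffun f lam1 lam2 B l u x
                               - (alpha / 2 * enorm (x - z) ^+ 2)%:E)%E.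

Definition Rk {n} (gf : 'cV[R]_n -> 'cV[R]_n) (G : 'M[R]_n) (Pi : set 'cV[R]_n)
  (mubar : R) (xk y : 'cV[R]_n) : 'cV[R]_n :=
  mubar *: (y - proj Pi (y - mubar^-1 *: (G *m (y - xk) + gf xk))).

Definition rk {n} (gf : 'cV[R]_n -> 'cV[R]_n) (Pi : set 'cV[R]_n) (mubar : R)
  (x : 'cV[R]_n) : 'cV[R]_n :=
  mubar *: (x - proj Pi (x - mubar^-1 *: gf x)).

Definition inexact_cond1 {n} f gf (G : 'M[R]_n) xk Pi (y : 'cV[R]_n) : Prop :=
  (Theta f gf G xk Pi y <= Theta f gf G xk Pi xk)%E.

Definition inexact_cond2 {n} f gf (G : 'M[R]_n) xk Pi (mubar varsigma : R)
  (xbar y : 'cV[R]_n) : Prop :=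
  (dist0 (subdiff (Theta f gf G xk Pi) y)
   <= (Num.min mubar^-1 1 / 2 *
       Num.min (enorm (mubar *: (xk - xbar)))
               (enorm (mubar *: (xk - xbar)) `^ (1 + varsigma)))%:E)%E.

Definition armijo {n} (f : 'cV[R]_n -> R) (gf : 'cV[R]_n -> 'cV[R]_n)
  (rho beta : R) (xk d : 'cV[R]_n) (t : nat) : Prop :=
  f (xk + beta ^+ t *: d) <= f xk + rho * beta ^+ t * dotv (gf xk) d.

End Defs.

(* Under the switch condition Pi(x^k) = Pi(xbar^k), and on this set the penalty g is at most
   g(xbar^k); hence the proximal point xbar^k is the projection of x^k - mubar^-1 grad f(x^k)
   onto Pi_k, i.e. r_k(x^k) = mubar (x^k - xbar^k).  Theta_k is a strongly convex quadratic
   plus the indicator of the compact convex set Pi_k, so v is a subgradient at y iff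
   v - grad q(y) lies in the normal cone of Pi_k at y.  Nonexpansiveness of the projection
   then gives ||R_k(y)|| <= ||v|| for every such v, which is (iii).  The projected-gradient
   point z(y) = y - mubar^-1 R_k(y) is Lipschitz in y, is fixed at the unique minimizer ys
   of Theta_k, and mubar (y - z) - G_k (y - z) is a subgradient at z; as ys <> x^k we have
   Theta_k(ys) < Theta_k(x^k), and continuity gives (i).  Finally the first inexactness
   condition yields <grad f(x^k), d> <= -e_k/2 ||d||^2, and the descent lemma shows that every
   step below (1 - rho) e_k / L1 passes the Armijo test, which gives (ii). *)

From Pilot Require Import Defs.
From HB Require Import structures.
From mathcomp Require Import all_boot all_order all_algebra.
From mathcomp Require Import all_classical all_reals all_analysis.
From mathcomp Require Import ring lra.
Set Implicit Arguments. Unset Strict Implicit. Unset Printing Implicit Defensive.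
Import Order.TTheory GRing.Theory Num.Theory.
Import numFieldNormedType.Exports.
Local Open Scope classical_set_scope.
Local Open Scope ring_scope.

Section InnerProduct.
Context {R : realType} {n : nat}.
Implicit Types (u v w : 'cV[R]_n) (a : R).

Lemma dotvC u v : dotv u v = dotv v u.
Proof. by apply: eq_bigr => i _; rewrite mulrC. Qed.

Lemma dotvDl u w v : dotv (u + w) v = dotv u v + dotv w v.
Proof. by rewrite /dotv -big_split; apply: eq_bigr => i _; rewrite mxE mulrDl. Qed.

Lemma dotvDr u w v : dotv v (u + w) = dotv v u + dotv v w.
Proof. by rewrite dotvC dotvDl !(dotvC v). Qed.

Lemma dotvZl a u v : dotv (a *: u) v = a * dotv u v.
Proof. by rewrite /dotv mulr_sumr; apply: eq_bigr => i _; rewrite mxE mulrA. Qed.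

Lemma dotvZr a u v : dotv v (a *: u) = a * dotv v u.
Proof. by rewrite dotvC dotvZl dotvC. Qed.

Lemma dotvNl u v : dotv (- u) v = - dotv u v.
Proof. by rewrite -scaleN1r dotvZl mulN1r. Qed.

Lemma dotvNr u v : dotv v (- u) = - dotv v u.
Proof. by rewrite dotvC dotvNl dotvC. Qed.

Lemma dotvBl u w v : dotv (u - w) v = dotv u v - dotv w v.
Proof. by rewrite dotvDl dotvNl. Qed.

Lemma dotvBr u w v : dotv v (u - w) = dotv v u - dotv v w.
Proof. by rewrite dotvDr dotvNr. Qed.

Lemma dotv0l v : dotv 0 v = 0.
Proof. by rewrite /dotv big1 // => i _; rewrite mxE mul0r. Qed.

Lemma dotv0r v : dotv v 0 = 0.
Proof. by rewrite dotvC dotv0l. Qed.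

Lemma dotvv_ge0 v : 0 <= dotv v v.
Proof. by apply: sumr_ge0 => i _; rewrite -expr2 sqr_ge0. Qed.

Lemma dotvv_eq0 v : dotv v v = 0 -> v = 0.
Proof.
move=> /psumr_eq0P v0; apply/matrixP => i j; rewrite (ord1 j) mxE.
by apply/eqP; rewrite -sqrf_eq0 expr2 v0 // => k _; rewrite -expr2 sqr_ge0.
Qed.

Lemma dotv_mulmx {m} (M : 'M[R]_(m, n)) (u : 'cV[R]_m) v :
  dotv u (M *m v) = dotv (M^T *m u) v.
Proof.
have dotvE p (x y : 'cV[R]_p) : dotv x y = (x^T *m y) 0 0.
  by rewrite mxE; apply: eq_bigr => i _; rewrite mxE.
by rewrite !dotvE trmx_mul trmxK mulmxA.
Qed.

Lemma enorm_ge0 v : 0 <= enorm v.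
Proof. exact: sqrtr_ge0. Qed.

Lemma enorm_sqr v : enorm v ^+ 2 = dotv v v.
Proof. by rewrite sqr_sqrtr // dotvv_ge0. Qed.

Lemma enorm0 : enorm (0 : 'cV[R]_n) = 0.
Proof. by rewrite /enorm dotv0l sqrtr0. Qed.

Lemma enorm_eq0 v : enorm v = 0 -> v = 0.
Proof. by move=> v0; apply: dotvv_eq0; rewrite -enorm_sqr v0 expr0n. Qed.

Lemma enormZ a v : enorm (a *: v) = `|a| * enorm v.
Proof.
by rewrite /enorm dotvZl dotvZr mulrA -expr2 sqrtrM ?sqr_ge0 // sqrtr_sqr.
Qed.

Lemma enormN v : enorm (- v) = enorm v.
Proof. by rewrite -scaleN1r enormZ normrN normr1 mul1r. Qed.

Lemma enormBC u v : enorm (u - v) = enorm (v - u).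
Proof. by rewrite -enormN opprB. Qed.

Lemma ler_of_sqr (a b : R) : 0 <= b -> a ^+ 2 <= b ^+ 2 -> a <= b.
Proof. by move=> b0 ab; nra. Qed.

Lemma dotv_le u v : dotv u v <= enorm u * enorm v.
Proof.
have [->|u0] := eqVneq u 0; first by rewrite dotv0l enorm0 mul0r.
have [->|v0] := eqVneq v 0; first by rewrite dotv0r enorm0 mulr0.
have enorm_gt0 w : w != 0 -> 0 < enorm w.
  by move=> w0; rewrite lt0r enorm_ge0 andbT; apply: contra w0 => /eqP/enorm_eq0->.
have a0 := enorm_gt0 _ u0; have b0 := enorm_gt0 _ v0.
have := dotvv_ge0 (enorm v *: u - enorm u *: v).
rewrite !(dotvBl, dotvBr, dotvZl, dotvZr) (dotvC v u) -!enorm_sqr => h.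
have : 0 <= (enorm u * enorm v) * (enorm u * enorm v - dotv u v) by nra.
by rewrite pmulr_rge0 ?mulr_gt0 // subr_ge0.
Qed.

Lemma normr_dotv_le u v : `|dotv u v| <= enorm u * enorm v.
Proof.
rewrite ler_norml dotv_le andbT -lerNl -dotvNl.
by apply: le_trans (dotv_le _ _) _; rewrite enormN.
Qed.

Lemma enormD_sqr u v :
  enorm (u + v) ^+ 2 = enorm u ^+ 2 + 2 * dotv u v + enorm v ^+ 2.
Proof. by rewrite !enorm_sqr !(dotvDl, dotvDr) (dotvC v u); ring. Qed.

Lemma ler_enormD u v : enorm (u + v) <= enorm u + enorm v.
Proof.
apply: ler_of_sqr; first by rewrite addr_ge0 ?enorm_ge0.
by rewrite enormD_sqr; have := dotv_le u v; nra.
Qed.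

Lemma ler_coord_enorm v i : `|v i 0| <= enorm v.
Proof.
apply: ler_of_sqr; first exact: enorm_ge0.
rewrite enorm_sqr /dotv (bigD1 i) //= real_normK ?num_real // -expr2 lerDl.
by apply: sumr_ge0 => j _; rewrite -expr2 sqr_ge0.
Qed.

Lemma enorm_le_sum_norm v : enorm v <= \sum_i `|v i 0|.
Proof.
apply: ler_of_sqr; first by apply: sumr_ge0.
rewrite enorm_sqr /dotv.
pose P (s t : R) := s <= t ^+ 2 /\ 0 <= t.
suff [] : P (\sum_i v i 0 * v i 0) (\sum_i `|v i 0|) by [].
apply: (big_rec2 P) => [|i s t _ [st t0]]; first by rewrite /P expr0n.
split; last by rewrite addr_ge0.
by rewrite -expr2 -(real_normK (num_real (v i 0))); have := normr_ge0 (v i 0); nra.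
Qed.

End InnerProduct.

Lemma mulmx_enorm_bound {R : realType} {m n} (M : 'M[R]_(m, n)) :
  exists2 K, 0 <= K & forall v, enorm (M *m v) <= K * enorm v.
Proof.
exists (\sum_i \sum_j `|M i j|); first by do 2![apply: sumr_ge0 => ? _].
move=> v; apply: le_trans (enorm_le_sum_norm _) _.
rewrite mulr_suml; apply: ler_sum => i _; rewrite mulr_suml mxE.
apply: le_trans (ler_norm_sum _ _ _) _; apply: ler_sum => j _.
by rewrite normrM ler_wpM2l // ler_coord_enorm.
Qed.

Section Projection.
Context {R : realType} {n : nat}.
Implicit Types (C : set 'cV[R]_n) (w q : 'cV[R]_n).

Definition is_convex C :=
  forall x y t, C x -> C y -> 0 <= t <= 1 -> C (x + t *: (y - x)).

Definition nearest C w q := C q /\ forall c, C c -> enorm (w - q) <= enorm (w - c).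

Definition normal_cone C q : set 'cV[R]_n :=
  [set v | forall c, C c -> dotv v (c - q) <= 0].

Lemma nearest_normal C w q : is_convex C -> nearest C w q -> normal_cone C q (w - q).
Proof.
move=> C_cvx [Cq q_min] c Cc; set s := dotv (w - q) (c - q).
rewrite leNgt; apply/negP => s_gt0.
set N := dotv (c - q) (c - q); have N_ge0 : 0 <= N by apply: dotvv_ge0.
(* moving from q towards c by the step t = s / (s + N) gets strictly closer to w *)
pose t := s / (s + N).
have sN_gt0 : 0 < s + N by rewrite ltr_wpDr.
have t_gt0 : 0 < t by rewrite divr_gt0.
have t_le1 : t <= 1 by rewrite ler_pdivrMr // mul1r lerDl.
have tsN : t * (s + N) = s by rewrite divfK // gt_eqF.
have := q_min _ (C_cvx _ _ t Cq Cc (introT andP (conj (ltW t_gt0) t_le1))).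
move/(lerXn2r 2 (enorm_ge0 _) (enorm_ge0 _)).
have -> : w - (q + t *: (c - q)) = (w - q) + (- t) *: (c - q).
  by rewrite scaleNr opprD addrA.
rewrite (enormD_sqr (w - q)) enormZ exprMn normrN real_normK ?num_real //.
by rewrite dotvZr !enorm_sqr -/s -/N; nra.
Qed.

Lemma normal_coneZ C q a v :
  0 < a -> normal_cone C q v -> normal_cone C q (a *: v).
Proof. by move=> a_gt0 qv c Cc; rewrite dotvZl pmulr_rle0 // qv. Qed.

Lemma normal_nearest C w q : C q -> normal_cone C q (w - q) -> nearest C w q.
Proof.
move=> Cq q_normal; split=> // c Cc.
apply: ler_of_sqr; first exact: enorm_ge0.
have -> : w - c = (w - q) + (q - c) by rewrite addrA subrK.
rewrite -[q - c]opprB (enormD_sqr (w - q)) dotvNr.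
by have := q_normal c Cc; have := sqr_ge0 (enorm (- (c - q))); lra.
Qed.

Lemma normal_nonexpansive C w1 w2 p1 p2 : C p1 -> C p2 ->
  normal_cone C p1 (w1 - p1) -> normal_cone C p2 (w2 - p2) ->
  enorm (p1 - p2) <= enorm (w1 - w2).
Proof.
move=> Cp1 Cp2 /(_ _ Cp2) h1 /(_ _ Cp1) h2.
have e : enorm (p1 - p2) ^+ 2 <= dotv (w1 - w2) (p1 - p2).
  move: h1 h2; rewrite -(opprB p1 p2) dotvNr enorm_sqr.
  rewrite !(dotvBl, dotvBr) !(dotvC p2 p1) !(dotvC w2 p1) !(dotvC w1 p2)
    !(dotvC w2 p2) !(dotvC w1 p1); lra.
have := dotv_le (w1 - w2) (p1 - p2).
by have := enorm_ge0 (p1 - p2); have := enorm_ge0 (w1 - w2); nra.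
Qed.

Lemma nearest_unique C w p q : is_convex C ->
  nearest C w p -> nearest C w q -> p = q.
Proof.
move=> C_cvx np nq.
have := normal_nonexpansive np.1 nq.1 (nearest_normal C_cvx np) (nearest_normal C_cvx nq).
rewrite subrr enorm0 => pq_le0.
have /enorm_eq0/eqP : enorm (p - q) = 0 by apply/le_anti; rewrite pq_le0 enorm_ge0.
by rewrite subr_eq0 => /eqP.
Qed.

Lemma proj_nearest C w : (exists q, nearest C w q) -> nearest C w (Defs.proj C w).
Proof. by move=> [q nq]; apply: (xgetI 0 nq). Qed.

Lemma proj_eq C w q : is_convex C -> nearest C w q -> Defs.proj C w = q.
Proof.
by move=> C_cvx nq; apply: (nearest_unique C_cvx _ nq); apply: proj_nearest; exists q.
Qed.

End Projection.

Section Compactness.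
Context {R : realType} {n : nat}.

Definition enorm_closed (C : set 'cV[R]_n) :=
  forall x, (forall e, 0 < e -> exists2 s, C s & enorm (x - s) < e) -> C x.

Definition enorm_continuous (phi : 'cV[R]_n -> R) :=
  forall x e, 0 < e -> exists2 d, 0 < d &
    forall y, enorm (x - y) < d -> `|phi x - phi y| < e.

Lemma enorm_trmx_lt (r s : 'rV[R]_n) e : 0 < e ->
  `|r - s| < e / (n%:R + 1) -> enorm (r^T - s^T) < e.
Proof.
move=> e_gt0 rs; rewrite -linearB /=.
apply: le_lt_trans (enorm_le_sum_norm _) _.
apply: le_lt_trans (_ : _ <= (n%:R + 1) * `|r - s|) _; last first.
  by rewrite mulrC -ltr_pdivlMr // ltr_wpDl.
apply: le_trans (_ : _ <= n%:R * `|r - s|) _; last by rewrite ler_wpM2r // lerDl.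
apply: le_trans (_ : _ <= \sum_(i < n) `|r - s|) _; last first.
  by rewrite sumr_const card_ord mulr_natl.
apply: ler_sum => i _; rewrite mxE.
by rewrite [leRHS]/Num.norm /= mx_normrE; apply/bigmax_geP; right; exists (0, i).
Qed.

Lemma closed_bounded_argmin (C : set 'cV[R]_n) (phi : 'cV[R]_n -> R) x0 : C x0 ->
  enorm_closed C -> (exists M, forall x, C x -> forall i, `|x i 0| <= M) ->
  enorm_continuous phi -> exists2 c, C c & forall x, C x -> phi c <= phi x.
Proof.
move=> Cx0 C_closed [M C_bounded] phi_cont.
(* the compactness theorem of the library is stated for row vectors *)
pose A := [set r : 'rV[R]_n | C r^T].
have n1_gt0 : 0 < n%:R + 1 :> R by rewrite ltr_wpDl.
have A0 : A !=set0 by exists x0^T; rewrite /A /= trmxK.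
have A_compact : compact A.
  apply: bounded_closed_compact.
    exists (Num.max M 0); split; first exact: num_real.
    move=> K; rewrite gt_max => /andP[MK K_gt0] r Ar /=.
    rewrite [`|r|]/Num.norm /= mx_normrE; apply: bigmax_le => [|[i j] _ /=].
      exact: ltW.
    by rewrite (ord1 i) -[r]trmxK mxE; apply/ltW/(le_lt_trans _ MK)/C_bounded.
  rewrite closedE => r r_cl; apply: C_closed => e e_gt0.
  apply: contrapT => far; apply: r_cl; apply/nbhs_ballP.
  exists (e / (n%:R + 1)) => /=; first by rewrite divr_gt0.
  move=> s; rewrite -ball_normE /= => rs As; apply: far; exists s^T => //.
  exact: enorm_trmx_lt.
have psi_cont : {within A, continuous (fun r => phi r^T)}.
  apply: continuous_subspaceT => r.
  apply/(@cvgrPdist_lt _ _ _ _ (nbhs_filter r)) => e e_gt0.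
  have [d d_gt0 Hd] := phi_cont r^T e e_gt0.
  apply/nbhs_ballP; exists (d / (n%:R + 1)) => /=; first by rewrite divr_gt0.
  by move=> s; rewrite -ball_normE /= => rs; apply/Hd/enorm_trmx_lt.
have [c Ac c_min] := EVT_min_rV A0 A_compact psi_cont.
exists c^T; first by move: Ac; rewrite inE.
by move=> x Cx; have := c_min x^T; rewrite trmxK; apply; rewrite inE /A /= trmxK.
Qed.

End Compactness.

Lemma supp_segment {R : realType} {m} (x y : 'cV[R]_m) (S : {set 'I_m}) t :
  supp x \subset S -> supp y \subset S -> supp (x + t *: (y - x)) \subset S.
Proof.
move=> /fintype.subsetP xS /fintype.subsetP yS; apply/fintype.subsetP => i.
rewrite !inE !mxE; apply: contraR => iS.
have /eqP-> : x i 0 == 0 by apply: contraR iS => xi; apply: xS; rewrite inE.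
have /eqP-> : y i 0 == 0 by apply: contraR iS => yi; apply: yS; rewrite inE.
by rewrite subrr mulr0 addr0.
Qed.

Lemma coord_dist_le {R : realType} {m} (x s : 'cV[R]_m) i :
  `|x i 0 - s i 0| <= enorm (x - s).
Proof. by have := ler_coord_enorm (x - s) i; rewrite !mxE. Qed.

Section PiSet.
Context {R : realType} {p n : nat}.
Variables (B : 'M[R]_(p, n)) (l u z : 'cV[R]_n).

Lemma Pi_set_convex : is_convex (Pi_set B l u z).
Proof.
move=> x y t [bx [sx sBx]] [by_ [sy sBy]] /andP[t0 t1]; split; [|split].
- move=> i; have := bx i; have := by_ i; rewrite !mxE => /andP[? ?] /andP[? ?].
  by apply/andP; split; nra.
- exact: supp_segment.
- by rewrite mulmxDr -scalemxAr mulmxBr; apply: supp_segment.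
Qed.

Lemma Pi_set_center : box l u z -> Pi_set B l u z z.
Proof. by []. Qed.

Lemma box_closed : enorm_closed (box l u).
Proof.
move=> x x_cl i; apply/andP; split; rewrite leNgt; apply/negP => out.
- have [s /(_ i)/andP[ls _]] : exists2 s, box l u s & enorm (x - s) < l i 0 - x i 0.
    by apply: x_cl; rewrite subr_gt0.
  by move/(le_lt_trans (coord_dist_le x s i)); rewrite ltr_norml => /andP[]; lra.
- have [s /(_ i)/andP[_ su]] : exists2 s, box l u s & enorm (x - s) < x i 0 - u i 0.
    by apply: x_cl; rewrite subr_gt0.
  by move/(le_lt_trans (coord_dist_le x s i)); rewrite ltr_norml => /andP[]; lra.
Qed.

Lemma supp_mulmx_closed {m} (M : 'M[R]_(m, n)) (S : {set 'I_m}) :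
  enorm_closed [set x | supp (M *m x) \subset S].
Proof.
move=> x x_cl /=; apply/fintype.subsetP => i; rewrite inE => Mx_i.
apply: contraR Mx_i => iS; apply/negPn/negP => Mx_i.
have [K K_ge0 MK] := mulmx_enorm_bound M.
have K1_gt0 : 0 < K + 1 by rewrite ltr_wpDl.
have [s /fintype.subsetP sS xs] : exists2 s, supp (M *m s) \subset S &
    enorm (x - s) < `|(M *m x) i 0| / (K + 1).
  by apply: x_cl; rewrite divr_gt0 // normr_gt0.
have /eqP Ms_i : (M *m s) i 0 == 0 by apply: contraR iS => ?; apply: sS; rewrite inE.
have := coord_dist_le (M *m x) (M *m s) i.
rewrite Ms_i subr0 -mulmxBr => Mx_i_le.
have : `|(M *m x) i 0| <= (K + 1) * enorm (x - s).
  apply: (le_trans Mx_i_le); apply: (le_trans (MK _)).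
  by rewrite ler_wpM2r ?enorm_ge0 ?lerDl.
by rewrite mulrC -ler_pdivrMr // leNgt xs.
Qed.

Lemma Pi_set_closed : enorm_closed (Pi_set B l u z).
Proof.
move=> x x_cl; split; [|split].
- by apply: (box_closed (x := x)) => e /x_cl [s [? _] ?]; exists s.
- rewrite -[x]mul1mx; apply: (supp_mulmx_closed (M := 1%:M) (x := x)).
  move=> e /x_cl [s [_ [? _]] ?].
  by exists s; rewrite //= mul1mx.
- by apply: (supp_mulmx_closed (M := B) (x := x)) => e /x_cl [s [_ [_ ?]] ?]; exists s.
Qed.

Lemma Pi_set_bounded : exists M, forall x, Pi_set B l u z x -> forall i, `|x i 0| <= M.
Proof.
exists (\sum_i (`|l i 0| + `|u i 0|)) => x [bx _] i.
apply: le_trans (_ : `|l i 0| + `|u i 0| <= _); last first.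
  by rewrite (bigD1 i) //= lerDl; apply: sumr_ge0 => j _; apply: addr_ge0.
have /andP[lx xu] := bx i.
have := ler_norm (u i 0); have := ler_norm (- l i 0); rewrite normrN.
have := normr_ge0 (l i 0); have := normr_ge0 (u i 0).
by rewrite ler_norml; move=> *; apply/andP; split; lra.
Qed.

Lemma Pi_set_nearest : box l u z -> forall w, exists q, nearest (Pi_set B l u z) w q.
Proof.
move=> bz w.
have dist_cont : enorm_continuous (fun x => enorm (w - x)).
  move=> x e e_gt0; exists e => // y xy.
  have t1 : enorm (w - x) <= enorm (w - y) + enorm (y - x).
    by apply: le_trans (ler_enormD _ _); rewrite addrA subrK.
  rewrite (enormBC y) in t1.
  have t2 : enorm (w - y) <= enorm (w - x) + enorm (x - y).
    by apply: le_trans (ler_enormD _ _); rewrite addrA subrK.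
  by apply: le_lt_trans xy; rewrite ler_norml; apply/andP; split; lra.
have [c Cc c_min] := closed_bounded_argmin (Pi_set_center bz) Pi_set_closed
  Pi_set_bounded dist_cont.
by exists c.
Qed.

End PiSet.

Section ProxStep.
Context {R : realType} {p n : nat}.
Variables (lam1 lam2 : R) (B : 'M[R]_(p, n)) (l u : 'cV[R]_n).

Lemma gfun_box x : box l u x ->
  gfun lam1 lam2 B l u x = (lam1 * (nnz (B *m x))%:R + lam2 * (nnz x)%:R)%:E.
Proof. by move=> bx; rewrite /gfun asboolT. Qed.

Lemma prox_box mu z x y :
  prox_set mu (gfun lam1 lam2 B l u) z x -> box l u y -> box l u x.
Proof.
move=> /(_ y) x_prox by_; apply: contrapT => bx; move: x_prox.
by rewrite /gfun (asboolF bx) (asboolT by_) addey.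
Qed.

Hypotheses (lam1_ge0 : 0 <= lam1) (lam2_ge0 : 0 <= lam2).

Lemma gfun_Pi_set_le z c : Pi_set B l u z c ->
  lam1 * (nnz (B *m c))%:R + lam2 * (nnz c)%:R
  <= lam1 * (nnz (B *m z))%:R + lam2 * (nnz z)%:R.
Proof.
by move=> [_ [sc sBc]]; apply: lerD; apply: ler_wpM2l => //;
  rewrite ler_nat; apply: subset_leq_card.
Qed.

Lemma prox_nearest_Pi_set mu z x : 0 < mu -> box l u x ->
  prox_set mu (gfun lam1 lam2 B l u) z x -> nearest (Pi_set B l u x) z x.
Proof.
move=> mu_gt0 bx x_prox; split=> // c Pc; have := x_prox c.
rewrite (gfun_box bx) (gfun_box Pc.1) -!EFinD lee_fin => prox_le.
have := gfun_Pi_set_le Pc; rewrite enormBC [enorm (z - c)]enormBC => g_le.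
apply: ler_of_sqr; first exact: enorm_ge0.
by rewrite -(ler_pM2l (_ : 0 < (2 * mu)^-1)) ?invr_gt0 ?mulr_gt0 //; lra.
Qed.

Lemma switch_prox_proj mu z xk xbar : 0 < mu -> box l u xk ->
  prox_set mu (gfun lam1 lam2 B l u) z xbar ->
  supp xk = supp xbar -> supp (B *m xk) = supp (B *m xbar) ->
  Defs.proj (Pi_set B l u xk) z = xbar.
Proof.
move=> mu_gt0 bxk xbar_prox supp_x supp_Bx.
have bxbar := prox_box xbar_prox bxk.
have -> : Pi_set B l u xk = Pi_set B l u xbar by rewrite /Pi_set supp_x supp_Bx.
apply: proj_eq; first by move=> ? ? ?; apply: Pi_set_convex.
exact: prox_nearest_Pi_set mu_gt0 bxbar xbar_prox.
Qed.

End ProxStep.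

Lemma dist0_le {R : realType} {n} (S : set 'cV[R]_n) v : S v -> (dist0 S <= (enorm v)%:E)%E.
Proof. by move=> Sv; apply: ereal_inf_lbound; exists v. Qed.

Lemma dist0_ge {R : realType} {n} (S : set 'cV[R]_n) r :
  (forall v, S v -> r <= enorm v) -> (r%:E <= dist0 S)%E.
Proof. by move=> r_le; apply: le_ereal_inf_tmp => _ [v Sv <-]; rewrite lee_fin r_le. Qed.

Section Descent.
Context {R : realType} {n : nat}.
Variables (f : 'cV[R]_n -> R) (gf : 'cV[R]_n -> 'cV[R]_n).
Hypothesis f_grad : forall x, differentiable f x /\ forall v, derive f x v = dotv (gf x) v.

Lemma is_derive_line x d s :
  is_derive s (1 : R) (fun s : R => f (s *: d + x)) (dotv (gf (s *: d + x)) d).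
Proof.
(* the difference quotients of the line function are those of f at s d + x in direction d *)
have eqf : (fun h : R => h^-1 *: (((fun s : R => f (s *: d + x)) \o shift s) (h *: 1)
              - f (s *: d + x))) =
           (fun h : R => h^-1 *: ((f \o shift (s *: d + x)) (h *: d) - f (s *: d + x))).
  apply: funext => h /=; congr (_ *: (f _ - _)).
  by rewrite /shift /= [_%:A]mulr1 scalerDl addrA.
have [df f'] := f_grad (s *: d + x).
apply: DeriveDef; first by rewrite /derivable eqf; apply: diff_derivable.
by rewrite /derive eqf -/(derive f (s *: d + x) d) f'.
Qed.

Lemma descent_lemma (D : set 'cV[R]_n) L x d :
  (forall s, 0 <= s <= 1 -> D (x + s *: d)) ->
  (forall y z, D y -> D z -> enorm (gf y - gf z) <= L * enorm (y - z)) ->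
  forall a, 0 < a <= 1 ->
  f (x + a *: d) <= f x + a * dotv (gf x) d + a ^+ 2 * (L / 2 * enorm d ^+ 2).
Proof.
move=> segD gf_lip a /andP[a_gt0 a_le1].
set k1 := dotv (gf x) d; set k2 := L / 2 * enorm d ^+ 2.
(* mean value theorem on [0, a] for the gap between f on the segment and its quadratic bound *)
pose F := fun s : R => f (s *: d + x) - (s * k1 + s ^+ 2 * k2).
have F' s : is_derive s (1 : R) F (dotv (gf (s *: d + x)) d - (k1 + 2 * s * k2)).
  apply: is_deriveB; first exact: is_derive_line.
  by apply: is_derive_eq; rewrite !scaler0 !add0r ![_%:A]mulr1 -[k2 *: _]/(k2 * _); ring.
have F_cont : {within `[0, a], continuous F}.
  by apply: derivable_within_continuous => s _; case: (F' s).
have [c c_in Fa] := MVT a_gt0 (fun s _ => F' s) F_cont.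
move: Fa; rewrite /F !scale0r !add0r mul0r expr0n /= mul0r addr0 subr0 (addrC (a *: d)).
move: c_in; rewrite in_itv /= => /andP[c_gt0 c_lta].
have Dc : D (c *: d + x).
  by rewrite addrC; apply: segD; rewrite ltW //= (ltW (lt_le_trans c_lta a_le1)).
have Dx : D x by have := segD 0; rewrite scale0r addr0 lexx ler01; apply.
have gf_c : dotv (gf (c *: d + x)) d - k1 <= L * c * enorm d ^+ 2.
  rewrite /k1 -dotvBl; apply: le_trans (dotv_le _ _) _.
  apply: le_trans (ler_wpM2r (enorm_ge0 _) (gf_lip _ _ Dc Dx)) _.
  by rewrite addrK enormZ ger0_norm ?(ltW c_gt0) // expr2 !mulrA.
have : dotv (gf (c *: d + x)) d - (k1 + 2 * c * k2) <= 0 by rewrite /k2; lra.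
move=> /mulr_le0_ge0 /(_ (ltW a_gt0)); rewrite subr0 => slope_le0 Fa.
by move: slope_le0; rewrite -Fa; lra.
Qed.

Lemma armijo_small_steps (D : set 'cV[R]_n) L e rho x d :
  (forall s, 0 <= s <= 1 -> D (x + s *: d)) ->
  (forall y z, D y -> D z -> enorm (gf y - gf z) <= L * enorm (y - z)) ->
  0 < L -> rho <= 1 -> dotv (gf x) d <= - (e / 2) * enorm d ^+ 2 ->
  forall a, 0 < a <= 1 -> a <= (1 - rho) * e / L ->
  f (x + a *: d) <= f x + rho * a * dotv (gf x) d.
Proof.
move=> segD gf_lip L_gt0 rho_le1 descent a /andP[a_gt0 a_le1] a_le.
have quad_bound := descent_lemma segD gf_lip (introT andP (conj a_gt0 a_le1)).
have aL : a * L <= (1 - rho) * e by rewrite -ler_pdivlMr.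
have h1 : (1 - rho) * a * dotv (gf x) d <= (1 - rho) * a * (- (e / 2) * enorm d ^+ 2).
  by apply: ler_wpM2l => //; apply: mulr_ge0; lra.
have h2 : a / 2 * enorm d ^+ 2 * (a * L) <= a / 2 * enorm d ^+ 2 * ((1 - rho) * e).
  by apply: ler_wpM2l => //; apply: mulr_ge0; [apply: divr_ge0; lra | exact: sqr_ge0].
by nra.
Qed.

End Descent.

Lemma exists_expr_le {R : realType} (beta theta : R) : 0 < beta < 1 -> 0 < theta ->
  exists t : nat, beta ^+ t <= theta.
Proof.
move=> /andP[beta_gt0 beta_lt1] theta_gt0.
have /cvg_expr/cvgrPdist_lt/(_ theta theta_gt0)[N _ beta_N] : `|beta| < 1.
  by rewrite ger0_norm // ltW.
exists N; have := beta_N N (leqnn N).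
by rewrite /= sub0r normrN ger0_norm ?exprn_ge0 ?(ltW beta_gt0) // => /ltW.
Qed.

Lemma backtracking_bound {R : realType} (P : nat -> Prop) (beta theta : R) :
  0 < beta < 1 -> 0 < theta -> (forall t, beta ^+ t <= theta -> P t) ->
  (exists t, P t) /\
  forall t, P t -> (forall t', (t' < t)%N -> ~ P t') ->
    Num.min 1 (beta * theta) <= beta ^+ t.
Proof.
move=> beta01 theta_gt0 P_small; split.
  by have [t ?] := exists_expr_le beta01 theta_gt0; exists t; apply: P_small.
move=> [|t] _ t_min; first by rewrite expr0 ge_min lexx.
have theta_lt : theta < beta ^+ t.
  by rewrite ltNge; apply/negP => /P_small; apply: t_min.
case/andP: beta01 => beta_gt0 _.
by rewrite ge_min exprS ler_pM2l // (ltW theta_lt) orbT.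
Qed.

Lemma ge0_of_affine_ge0 {R : realType} (s K : R) :
  (forall t, 0 < t <= 1 -> 0 <= s + t * K) -> 0 <= s.
Proof.
move=> affine_ge0; rewrite leNgt; apply/negP => s_lt0.
have sK_gt0 : 0 < - s + `|K| by rewrite ltr_wpDr // oppr_gt0.
pose t := - s / (- s + `|K|).
have t_gt0 : 0 < t by rewrite divr_gt0 // oppr_gt0.
have t_le1 : t <= 1 by rewrite ler_pdivrMr // mul1r lerDl.
have tsK : t * (- s + `|K|) = - s by rewrite divfK // gt_eqF.
have := affine_ge0 t; rewrite t_gt0 t_le1 => /(_ isT) st_ge0.
have : t * K <= t * `|K| by apply: ler_wpM2l; [exact: ltW | exact: ler_norm].
by nra.
Qed.

Lemma psd_sub_scalar {R : realType} {n} (G : 'M[R]_n) e : psd (G - e%:M) ->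
  G^T = G /\ forall w, e * dotv w w <= dotv w (G *m w).
Proof.
move=> [G_sym G_psd]; split.
  by move: G_sym; rewrite linearB /= tr_scalar_mx => /(congr1 (+%R^~ e%:M)); rewrite !subrK.
by move=> w; have := G_psd w; rewrite mulmxBl mul_scalar_mx dotvBr dotvZr subr_ge0.
Qed.

Section QuadraticModel.
Context {R : realType} {n : nat}.
Variables (f : 'cV[R]_n -> R) (gf : 'cV[R]_n -> 'cV[R]_n) (G : 'M[R]_n)
  (xk : 'cV[R]_n) (C : set 'cV[R]_n).

Definition qmodel y := f xk + dotv (gf xk) (y - xk) + 2^-1 * dotv (y - xk) (G *m (y - xk)).
Definition qgrad y := G *m (y - xk) + gf xk.

Local Notation Th := (Theta f gf G xk C).

Lemma Theta_in y : C y -> Th y = (qmodel y)%:E.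
Proof. by move=> Cy; rewrite /Theta asboolT. Qed.

Lemma Theta_notin y : ~ C y -> Th y = +oo%E.
Proof. by move=> Cy; rewrite /Theta asboolF. Qed.

Lemma Theta_le_in y z : C z -> (Th y <= Th z)%E -> C y.
Proof. by move=> Cz; apply: contraPP => Cy; rewrite Theta_notin // Theta_in // leye_eq. Qed.

Lemma qmodel_center : qmodel xk = f xk.
Proof. by rewrite /qmodel subrr dotv0r mulmx0 dotv0r mulr0 !addr0. Qed.

Lemma qgrad_center : qgrad xk = gf xk.
Proof. by rewrite /qgrad subrr mulmx0 add0r. Qed.

Hypothesis G_sym : G^T = G.

Lemma qmodel_expand y z :
  qmodel z = qmodel y + dotv (qgrad y) (z - y) + 2^-1 * dotv (z - y) (G *m (z - y)).
Proof.
rewrite /qmodel /qgrad.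
have -> : z - xk = (y - xk) + (z - y) by rewrite [RHS]addrC addrA subrK.
have G_symv a h : dotv a (G *m h) = dotv h (G *m a) by rewrite dotv_mulmx G_sym dotvC.
move: (y - xk) (z - y) => a h.
rewrite !mulmxDr !(dotvDl, dotvDr) (G_symv a h) (dotvC (G *m a) h) (dotvC (gf xk) h).
lra.
Qed.

Lemma qmodel_continuous : enorm_continuous qmodel.
Proof.
move=> x e e_gt0.
have [K K_ge0 GK] := mulmx_enorm_bound G.
set Kg := enorm (qgrad x); have Kg_ge0 : 0 <= Kg := enorm_ge0 _.
have c_gt0 : 0 < Kg + K + 1 by lra.
exists (Num.min 1 (e / (Kg + K + 1))); first by rewrite lt_min ltr01 divr_gt0.
move=> y; rewrite lt_min => /andP[xy_lt1 xy_lt]; set D := enorm (x - y).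
have D_ge0 : 0 <= D := enorm_ge0 _.
have D_e : D * (Kg + K + 1) < e by rewrite -ltr_pdivlMr.
have lin : `|dotv (qgrad x) (y - x)| <= Kg * D.
  by rewrite /D enormBC; apply: normr_dotv_le.
have quad : `|dotv (y - x) (G *m (y - x))| <= D * (K * D).
  rewrite /D enormBC; apply: le_trans (normr_dotv_le _ _) _.
  by apply: ler_wpM2l; [exact: enorm_ge0 | exact: GK].
have quad_le : D * (K * D) <= K * D.
  by rewrite mulrC; apply: ler_piMr; [exact: mulr_ge0 | exact: ltW].
have -> : qmodel x - qmodel y =
    - (dotv (qgrad x) (y - x) + 2^-1 * dotv (y - x) (G *m (y - x))).
  by rewrite (qmodel_expand x y); ring.
rewrite normrN.
apply: le_lt_trans (ler_normD _ _) _; rewrite normrM ger0_norm ?invr_ge0 //.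
have := normr_ge0 (dotv (y - x) (G *m (y - x))); nra.
Qed.

Hypothesis C_convex : is_convex C.

Lemma subdiff_Theta_normal y v :
  subdiff Th y v -> C y /\ normal_cone C y (v - qgrad y).
Proof.
move=> [Thy_fin v_sub]; have Cy : C y.
  by apply: contrapT => Cy; move: Thy_fin; rewrite Theta_notin.
split=> // c Cc; rewrite -oppr_ge0 -dotvNl opprB.
apply: (ge0_of_affine_ge0 (K := 2^-1 * dotv (c - y) (G *m (c - y)))).
move=> t /andP[t_gt0 t_le1].
have Cyt := @C_convex _ _ t Cy Cc (introT andP (conj (ltW t_gt0) t_le1)).
have := v_sub (y + t *: (c - y)); rewrite !Theta_in // -EFinD lee_fin.
rewrite (qmodel_expand y (y + t *: (c - y))).
have -> : y + t *: (c - y) - y = t *: (c - y) by rewrite addrC addKr.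
rewrite !dotvZr dotvZl -scalemxAr dotvZr (dotvBl (qgrad y) v) => sub_le.
have : 0 <= t * (dotv (qgrad y) (c - y) - dotv v (c - y)
                 + t * (2^-1 * dotv (c - y) (G *m (c - y)))) by lra.
by rewrite pmulr_rge0.
Qed.

Variable e : R.
Hypotheses (e_gt0 : 0 < e) (G_ge : forall w, e * dotv w w <= dotv w (G *m w)).

Lemma G_psd w : 0 <= dotv w (G *m w).
Proof. exact: le_trans (mulr_ge0 (ltW e_gt0) (dotvv_ge0 w)) (G_ge w). Qed.

Lemma normal_subdiff_Theta y v :
  C y -> normal_cone C y (v - qgrad y) -> subdiff Th y v.
Proof.
move=> Cy y_normal; split=> [|z]; first by rewrite Theta_in.
have [Cz|Cz] := pselect (C z); last by rewrite (Theta_notin Cz) leey.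
rewrite !Theta_in // -EFinD lee_fin (qmodel_expand y z).
have := y_normal z Cz; have := G_psd (z - y); rewrite (dotvBl v); lra.
Qed.

Lemma Theta_descent y : C xk -> (Th y <= Th xk)%E ->
  dotv (gf xk) (y - xk) <= - (e / 2) * enorm (y - xk) ^+ 2.
Proof.
move=> Cxk Thy_le; have Cy := Theta_le_in Cxk Thy_le.
move: Thy_le; rewrite !Theta_in // lee_fin qmodel_center /qmodel enorm_sqr.
by have := G_ge (y - xk); lra.
Qed.

Lemma inexact_cond1_armijo (D : set 'cV[R]_n) L rho beta y :
  (forall x, differentiable f x /\ forall v, derive f x v = dotv (gf x) v) ->
  C `<=` D -> (forall y z, D y -> D z -> enorm (gf y - gf z) <= L * enorm (y - z)) ->
  0 < L -> rho < 1 -> 0 < beta < 1 -> C xk -> inexact_cond1 f gf G xk C y ->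
  (exists t, armijo f gf rho beta xk (y - xk) t) /\
  forall t, armijo f gf rho beta xk (y - xk) t ->
    (forall t', (t' < t)%N -> ~ armijo f gf rho beta xk (y - xk) t') ->
    Num.min 1 (beta * ((1 - rho) * e / L)) <= beta ^+ t.
Proof.
move=> f_grad CD gf_lip L_gt0 rho_lt1 beta01 Cxk cond1.
have Cy := Theta_le_in Cxk cond1.
have seg s : 0 <= s <= 1 -> D (xk + s *: (y - xk)) by move=> s01; apply/CD/C_convex.
have theta_gt0 : 0 < (1 - rho) * e / L by rewrite divr_gt0 // mulr_gt0 // subr_gt0.
apply: backtracking_bound => // t t_le; have /andP[beta_gt0 beta_lt1] := beta01.
have descent := Theta_descent Cxk cond1.
apply: (armijo_small_steps f_grad seg gf_lip L_gt0 (ltW rho_lt1) descent) => //.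
by rewrite exprn_gt0 // exprn_ile1 // ltW.
Qed.

Definition Theta_argmin y := forall z, (Th y <= Th z)%E.

Lemma Theta_argmin_subdiff0 y : C y -> Theta_argmin y -> subdiff Th y 0.
Proof. by move=> Cy y_min; split=> [|z]; [rewrite Theta_in | rewrite dotv0l adde0]. Qed.

Lemma Theta_argmin_unique ys y : C ys -> Theta_argmin ys -> Theta_argmin y -> y = ys.
Proof.
move=> Cys ys_min y_min; have Cy := Theta_le_in Cys (y_min ys).
have [_ /(_ y Cy)] := subdiff_Theta_normal (Theta_argmin_subdiff0 Cys ys_min).
rewrite sub0r dotvNl oppr_le0 => ys_vi.
have := y_min ys; rewrite !Theta_in // lee_fin (qmodel_expand ys y) => q_le.
have : e * dotv (y - ys) (y - ys) <= 0 by have := G_ge (y - ys); lra.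
rewrite pmulr_rle0 // => dd_le0.
by apply/eqP; rewrite -subr_eq0; apply/eqP/dotvv_eq0/le_anti; rewrite dd_le0 dotvv_ge0.
Qed.

Lemma Theta_argmin_exists : C xk -> enorm_closed C ->
  (exists M, forall x, C x -> forall i, `|x i 0| <= M) ->
  exists2 ys, C ys & Theta_argmin ys.
Proof.
move=> Cxk C_closed C_bounded.
have [ys Cys ys_min] := closed_bounded_argmin Cxk C_closed C_bounded qmodel_continuous.
exists ys => // z; have [Cz|Cz] := pselect (C z); last by rewrite (Theta_notin Cz) leey.
by rewrite !Theta_in // lee_fin ys_min.
Qed.

Lemma Theta_argmin_lt ys : C xk -> C ys -> Theta_argmin ys -> ys != xk ->
  qmodel ys < qmodel xk.
Proof.
move=> Cxk Cys ys_min; apply: contraNT; rewrite -leNgt => q_le.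
have xk_min : Theta_argmin xk.
  by move=> z; apply: le_trans (ys_min z); rewrite !Theta_in // lee_fin.
by rewrite (Theta_argmin_unique Cys ys_min xk_min).
Qed.

Variable mubar : R.
Hypotheses (mubar_gt0 : 0 < mubar) (C_nearest : forall w, exists q, nearest C w q).

Definition pg_point y := Defs.proj C (y - mubar^-1 *: qgrad y).

Lemma pg_point_normal y :
  C (pg_point y) /\ normal_cone C (pg_point y) (y - mubar^-1 *: qgrad y - pg_point y).
Proof.
have near := proj_nearest (C_nearest (y - mubar^-1 *: qgrad y)).
by split; [case: near | apply: nearest_normal].
Qed.

Lemma Rk_step y : y - mubar^-1 *: Rk gf G C mubar xk y = pg_point y.
Proof. by rewrite /Rk scalerA mulVf ?gt_eqF // scale1r opprB addrC subrK. Qed.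

Lemma Rk_le_subdiff y v : subdiff Th y v -> enorm (Rk gf G C mubar xk y) <= enorm v.
Proof.
move=> /subdiff_Theta_normal [Cy y_normal].
have [Cp p_normal] := pg_point_normal y.
have shifted : normal_cone C y (y + mubar^-1 *: (v - qgrad y) - y).
  by rewrite addrC addKr; apply: normal_coneZ; rewrite ?invr_gt0.
have := normal_nonexpansive Cp Cy p_normal shifted.
have -> : y - mubar^-1 *: qgrad y - (y + mubar^-1 *: (v - qgrad y)) = - (mubar^-1 *: v).
  by move: (qgrad y) => g; apply/matrixP => i j; rewrite !mxE; ring.
rewrite enormN enormZ ger0_norm ?invr_ge0 ?(ltW mubar_gt0) // => p_le.
rewrite /Rk -/(pg_point y) enormZ ger0_norm ?(ltW mubar_gt0) // enormBC.
by rewrite -ler_pdivlMl // mulrC.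
Qed.

Lemma pg_point_subdiff y :
  subdiff Th (pg_point y) (mubar *: (y - pg_point y) - G *m (y - pg_point y)).
Proof.
have [Cp p_normal] := pg_point_normal y; apply: normal_subdiff_Theta => //.
suff -> : mubar *: (y - pg_point y) - G *m (y - pg_point y) - qgrad (pg_point y)
    = mubar *: (y - mubar^-1 *: qgrad y - pg_point y) by apply: normal_coneZ.
rewrite /qgrad (_ : G *m (y - xk) = G *m (pg_point y - xk) + G *m (y - pg_point y)).
  move: (G *m (pg_point y - xk)) (G *m (y - pg_point y)) => M1 M2.
  by apply/matrixP => i j; rewrite !mxE; field; rewrite gt_eqF.
by rewrite -mulmxDr [pg_point y - xk + _]addrC addrA subrK.
Qed.

Lemma pg_point_fixed y : C y -> subdiff Th y 0 -> pg_point y = y.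
Proof.
move=> Cy /subdiff_Theta_normal [_ y_normal]; apply: proj_eq => //.
apply: normal_nearest => //; rewrite addrC addKr -scalerN -sub0r.
by apply: normal_coneZ; rewrite ?invr_gt0.
Qed.

Lemma pg_point_lipschitz K : (forall v, enorm (G *m v) <= K * enorm v) ->
  forall y y', enorm (pg_point y - pg_point y') <= (1 + mubar^-1 * K) * enorm (y - y').
Proof.
move=> GK y y'.
apply: le_trans (normal_nonexpansive (pg_point_normal y).1 (pg_point_normal y').1
  (pg_point_normal y).2 (pg_point_normal y').2) _.
have -> : y - mubar^-1 *: qgrad y - (y' - mubar^-1 *: qgrad y')
    = (y - y') - mubar^-1 *: (G *m (y - y')).
  rewrite /qgrad (_ : G *m (y - y') = G *m (y - xk) - G *m (y' - xk)).
    move: (G *m (y - xk)) (G *m (y' - xk)) => M1 M2.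
    by apply/matrixP => i j; rewrite !mxE; ring.
  by rewrite -mulmxBr opprB addrA subrK.
have mubarV_ge0 : 0 <= mubar^-1 by rewrite invr_ge0 ltW.
apply: le_trans (ler_enormD _ _) _; rewrite enormN enormZ ger0_norm //.
by rewrite mulrDl mul1r lerD2l -mulrA ler_wpM2l.
Qed.

Lemma pg_point_near_argmin ys c2 : C xk -> C ys -> Theta_argmin ys ->
  qmodel ys < qmodel xk -> 0 < c2 ->
  exists2 delta, 0 < delta & forall y, enorm (y - ys) < delta ->
    (Th (pg_point y) <= Th xk)%E /\ (dist0 (subdiff Th (pg_point y)) <= c2%:E)%E.
Proof.
move=> Cxk Cys ys_min gap c2_gt0.
have ys_fixed := pg_point_fixed Cys (Theta_argmin_subdiff0 Cys ys_min).
have [K K_ge0 GK] := mulmx_enorm_bound G.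
set L0 := 1 + mubar^-1 * K.
have L0_ge1 : 1 <= L0 by rewrite lerDl mulr_ge0 // invr_ge0 ltW.
have gap_gt0 : 0 < qmodel xk - qmodel ys by rewrite subr_gt0.
have [d d_gt0 q_near] := qmodel_continuous ys gap_gt0.
(* the residual subgradient grows at most like (mubar + K) (1 + L0) |y - ys| *)
set M := (mubar + K) * (1 + L0).
have M_gt0 : 0 < M by apply: mulr_gt0; have := mubar_gt0; clearbody L0; lra.
have L0_gt0 : 0 < L0 by clearbody L0; lra.
exists (Num.min (d / L0) (c2 / M)); first by rewrite lt_min !divr_gt0.
move=> y; rewrite lt_min => /andP[y_d y_c2]; set D := enorm (y - ys).
have p_ys : enorm (pg_point y - ys) <= L0 * D.
  by rewrite -{1}ys_fixed; apply: pg_point_lipschitz.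
split.
  have Cp := (pg_point_normal y).1.
  rewrite !Theta_in // lee_fin; apply: ltW.
  have : enorm (ys - pg_point y) < d.
    by rewrite enormBC; apply: le_lt_trans p_ys _; rewrite mulrC -ltr_pdivlMr.
  by move/q_near; rewrite ltr_norml => /andP[? ?]; lra.
apply: le_trans (dist0_le (pg_point_subdiff y)) _; rewrite lee_fin.
have y_p : enorm (y - pg_point y) <= (1 + L0) * D.
  have -> : y - pg_point y = (y - ys) - (pg_point y - ys) by rewrite opprB addrA subrK.
  apply: le_trans (ler_enormD _ _) _; rewrite enormN -/D; lra.
apply: le_trans (ler_enormD _ _) _; rewrite enormN enormZ ger0_norm ?(ltW mubar_gt0) //.
apply: le_trans (_ : (mubar + K) * enorm (y - pg_point y) <= _).
  by have := GK (y - pg_point y); lra.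
apply: le_trans (_ : M * D <= _); last by rewrite mulrC -ler_pdivlMr // ltW.
by rewrite /M -mulrA ler_wpM2l // addr_ge0 // ltW.
Qed.


Lemma Theta_local_inexact c2 : C xk -> enorm_closed C ->
  (exists M, forall x, C x -> forall i, `|x i 0| <= M) ->
  pg_point xk != xk -> 0 < c2 ->
  exists ys, Theta_argmin ys /\ (forall y, Theta_argmin y -> y = ys) /\
    exists delta, 0 < delta /\ forall y, enorm (y - ys) < delta ->
      (Th (pg_point y) <= Th xk)%E /\ (dist0 (subdiff Th (pg_point y)) <= c2%:E)%E.
Proof.
move=> Cxk C_closed C_bounded xk_moves c2_gt0.
have [ys Cys ys_min] := Theta_argmin_exists Cxk C_closed C_bounded.
have ys_ne : ys != xk.
  apply: contraNneq xk_moves => ys_xk.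
  by rewrite -ys_xk pg_point_fixed //; apply: Theta_argmin_subdiff0.
have [delta delta_gt0 near] :=
  pg_point_near_argmin Cxk Cys ys_min (Theta_argmin_lt Cxk Cys ys_min ys_ne) c2_gt0.
exists ys; split=> //; split; first by move=> y y_min; apply: Theta_argmin_unique.
by exists delta.
Qed.

Lemma Rk_inexact_cond2 varsigma xbar y :
  inexact_cond2 f gf G xk C mubar varsigma xbar y ->
  enorm (Rk gf G C mubar xk y) <= 2^-1 * Num.min (enorm (mubar *: (xk - xbar)))
                                        (enorm (mubar *: (xk - xbar)) `^ (1 + varsigma)).
Proof.
move=> cond2; have := le_trans (dist0_ge (@Rk_le_subdiff y)) cond2.
rewrite lee_fin => /le_trans; apply; apply: ler_wpM2r.
  by rewrite le_min enorm_ge0 powR_ge0.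
by rewrite -[leRHS]mul1r ler_pM2r ?invr_gt0 // ge_min lexx orbT.
Qed.

End QuadraticModel.

Theorem lemma4p1 (R : realType) (n p : nat) (B : 'M[R]_(p, n)) (lam1 lam2 : R)
  (l u : 'cV[R]_n) (f : 'cV[R]_n -> R) (gf : 'cV[R]_n -> 'cV[R]_n)
  (Hf : 'cV[R]_n -> 'M[R]_n) (L1 : R)
  (eps mu_min mu_max tau alpha b1 b2 rho sigma varsigma beta : R)
  (xk xbar : 'cV[R]_n) (mu_k : R) (m_k : nat) (G : 'M[R]_n) :
  0 < lam1 -> 0 < lam2 ->
  (forall i, l i 0 <= 0 <= u i 0) ->
  C2_with f gf Hf ->
  0 < L1 ->
  (forall x y, box l u x -> box l u y -> enorm (gf x - gf y) <= L1 * enorm (x - y)) ->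
  0 <= eps -> 0 < mu_min -> mu_min < mu_max -> 1 < tau -> 0 < alpha ->
  0 < b1 -> 1 <= b2 -> 0 < rho < 2^-1 -> 0 < sigma < 2^-1 ->
  sigma < varsigma <= 1 -> 0 < beta < 1 ->
  (* iteration k: current iterate, PG step *)
  box l u xk ->
  mu_min <= mu_k <= mu_max ->
  pg_ok f gf lam1 lam2 B l u alpha mu_k tau xk m_k xbar ->
  (forall m, (m < m_k)%N -> forall z, ~ pg_ok f gf lam1 lam2 B l u alpha mu_k tau xk m z) ->
  let mubar := mu_k * tau ^+ m_k in
  (* no stop *)
  eps < mubar * enorm (xk - xbar) ->
  (* switch condition *)
  supp xk = supp xbar -> supp (B *m xk) = supp (B *m xbar) ->
  (* Newton step data *)
  let Pik := Pi_set B l u xk in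
  let ek := b1 * enorm (mubar *: (xk - xbar)) `^ sigma in
  G_choice f gf Hf b2 xk ek G ->
  psd (G - ek%:M) ->
  (* (i) *)
  (exists ystar,
     (forall z, (Theta f gf G xk Pik ystar <= Theta f gf G xk Pik z)%E) /\
     (forall y', (forall z, (Theta f gf G xk Pik y' <= Theta f gf G xk Pik z)%E) ->
                 y' = ystar) /\
     exists delta, 0 < delta /\
       forall y, enorm (y - ystar) < delta ->
         let z := y - mubar^-1 *: Rk gf G Pik mubar xk y in
         inexact_cond1 f gf G xk Pik z /\
         inexact_cond2 f gf G xk Pik mubar varsigma xbar z) /\
  (* (ii) *)
  (forall y, inexact_cond1 f gf G xk Pik y ->
             inexact_cond2 f gf G xk Pik mubar varsigma xbar y ->
     let d := y - xk in
     (exists t : nat, armijo f gf rho beta xk d t) /\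
     forall t : nat, armijo f gf rho beta xk d t ->
       (forall t', (t' < t)%N -> ~ armijo f gf rho beta xk d t') ->
       Num.min 1 ((1 - rho) * b1 * beta / L1 * enorm (mubar *: (xk - xbar)) `^ sigma)
         <= beta ^+ t) /\
  (* (iii) *)
  (forall y, inexact_cond2 f gf G xk Pik mubar varsigma xbar y ->
     enorm (Rk gf G Pik mubar xk y)
       <= 2^-1 * Num.min (enorm (rk gf Pik mubar xk))
                         (enorm (rk gf Pik mubar xk) `^ (1 + varsigma))).
Proof.
move=> lam1_gt0 lam2_gt0 _ f_C2 L1_gt0 gf_lip eps_ge0 mu_min_gt0 _ tau_gt1 _ b1_gt0 _
  /andP[_ rho_lt] _ _ beta01 bxk /andP[mu_min_le _] [xbar_prox _] _
  mubar no_stop supp_x supp_Bx Pik ek _ G_psd.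
have mubar_gt0 : 0 < mubar.
  apply: mulr_gt0; first exact: lt_le_trans mu_min_gt0 mu_min_le.
  by apply/exprn_gt0/(lt_trans ltr01).
set A := enorm (mubar *: (xk - xbar)).
have A_gt0 : 0 < A.
  by rewrite /A enormZ ger0_norm ?(ltW mubar_gt0) //; exact: le_lt_trans eps_ge0 no_stop.
have ek_gt0 : 0 < ek by rewrite mulr_gt0 // powR_gt0.
have [G_sym G_ge] := psd_sub_scalar G_psd.
have P_cvx : is_convex Pik by move=> ? ? ?; apply: Pi_set_convex.
have P_near := Pi_set_nearest B bxk.
have xbar_proj : Defs.proj Pik (xk - mubar^-1 *: gf xk) = xbar.
  by apply: (switch_prox_proj (ltW lam1_gt0) (ltW lam2_gt0) _ bxk xbar_prox);
    rewrite ?invr_gt0.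
split; [|split].
- have xk_moves : pg_point gf G xk Pik mubar xk != xk.
    rewrite /pg_point qgrad_center xbar_proj; apply: contraTneq A_gt0 => xbar_xk.
    by rewrite /A xbar_xk subrr scaler0 enorm0 ltxx.
  have c2_gt0 : 0 < Num.min mubar^-1 1 / 2 * Num.min A (A `^ (1 + varsigma)).
    by rewrite !mulr_gt0 // lt_min ?invr_gt0 ?powR_gt0 ?mubar_gt0 ?ltr01 ?A_gt0.
  have [ys [ys_min [ys_unique [delta [delta_gt0 near]]]]] :=
    Theta_local_inexact f G_sym P_cvx ek_gt0 G_ge mubar_gt0 P_near
      (Pi_set_center B bxk) (@Pi_set_closed _ _ _ B l u xk) (Pi_set_bounded B l u xk)
      xk_moves c2_gt0.
  exists ys; split=> //; split=> //; exists delta; split=> // y /near.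
  by rewrite /= Rk_step.
- move=> y cond1 _.
  have rho_lt1 : rho < 1 by apply: lt_trans rho_lt _; rewrite invf_lt1 // ltr1n.
  have P_box : Pik `<=` box l u by move=> ? [].
  have [armijo_ex armijo_bound] := inexact_cond1_armijo P_cvx ek_gt0 G_ge f_C2.1 P_box
    gf_lip L1_gt0 rho_lt1 beta01 (Pi_set_center B bxk) cond1.
  have -> : (1 - rho) * b1 * beta / L1 * A `^ sigma = beta * ((1 - rho) * ek / L1).
    by rewrite /ek -/A; ring.
  by split=> // t /armijo_bound.
- by move=> y; rewrite /rk xbar_proj; apply: Rk_inexact_cond2.
Qed.
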